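(* Let $\mathcal{H}_A$ be a complex Hilbert space of finite dimension $d_A\ge 2$. Then the inequality $$N_{A:CB}\le N_{AC:B}+N_{AB:C}$$ holds for every pure state $|\psi\rangle\langle\psi|$ on $\mathcal{H}_A\otimes\mathcal{H}_B\otimes\mathcal{H}_C$, for all finite-dimensional complex Hilbert spaces $\mathcal{H}_B,\mathcal{H}_C$, if and only if $d_A=2$ (i.e. subsystem $A$ is a qubit).
   Context: For a bipartite state $\rho_{XY}$ on $\mathcal{H}_X\otimes\mathcal{H}_Y$, the negativity is $N_{X:Y}=\frac{\|\rho_{XY}^{T_X}\|_1-1}{2}$, where $\rho_{XY}^{T_X}$ is the partial transpose with respect to subsystem $X$ and $\|\sigma\|_1=\mathrm{Tr}\sqrt{\sigma^\dagger\sigma}$ is the trace norm. For a tripartite state, $N_{A:CB}$, $N_{AC:B}$, $N_{AB:C}$ denote the negativities of the state with respect to the bipartitions $A|BC$, $AC|B$ and $AB|C$ respectively. *)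

From HB Require Import structures.
From mathcomp Require Import all_boot all_order all_algebra.
From mathcomp Require Import complex mxtens reals.
From Stdlib Require Import ClassicalEpsilon.
Set Implicit Arguments. Unset Strict Implicit. Unset Printing Implicit Defensive.
Import Order.TTheory GRing.Theory Num.Theory.
Local Open Scope ring_scope.

Definition adjmx (C : numClosedFieldType) m n (A : 'M[C]_(m, n)) : 'M[C]_(n, m) :=
  \matrix_(i, j) (A j i)^*.

(* positive semidefinite: <x, P x> >= 0 for every x (over C this forces hermitian) *)
Definition psdmx (C : numClosedFieldType) n (P : 'M[C]_n) : Prop :=
  forall x : 'cV[C]_n, 0 <= (adjmx x *m P *m x) 0 0.

(* the (positive semidefinite) square root of a matrix: some PSD P with P*P = M
   (unique when M is PSD, which is the only case used) *)
Definition mxsqrt (C : numClosedFieldType) n (M : 'M[C]_n) : 'M[C]_n :=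
  epsilon (inhabits 0) (fun P : 'M[C]_n => psdmx P /\ P *m P = M).

Definition trace_norm (C : numClosedFieldType) n (S : 'M[C]_n) : C :=
  \tr (mxsqrt (adjmx S *m S)).

(* partial transpose w.r.t. the first factor X of H_X (x) H_Y = C^(m*n),
   with the standard Kronecker index (i,j) |-> i*n + j:
   (rho^{T_X})_{(i,j),(i',j')} = rho_{(i',j),(i,j')} *)
Definition ptransposeX (C : numClosedFieldType) m n (rho : 'M[C]_(m * n)) : 'M[C]_(m * n) :=
  \matrix_(u, v)
    rho (mxtens_index ((mxtens_unindex v).1, (mxtens_unindex u).2))
        (mxtens_index ((mxtens_unindex u).1, (mxtens_unindex v).2)).

Definition negativity (C : numClosedFieldType) m n (rho : 'M[C]_(m * n)) : C :=
  (trace_norm (ptransposeX rho) - 1) / 2%:R.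

Definition pure_dm (C : numClosedFieldType) n (v : 'cV[C]_n) : 'M[C]_n := v *m adjmx v.

Definition coefABC (C : numClosedFieldType) a b c (psi : 'cV[C]_(a * b * c))
  (i : 'I_a) (j : 'I_b) (k : 'I_c) : C :=
  psi (mxtens_index (mxtens_index (i, j), k)) 0.

Definition vec_A_CB (C : numClosedFieldType) a b c (psi : 'cV[C]_(a * b * c)) :
  'cV[C]_(a * (c * b)) :=
  \col_u coefABC psi (mxtens_unindex u).1
                     (mxtens_unindex (mxtens_unindex u).2).2
                     (mxtens_unindex (mxtens_unindex u).2).1.

Definition vec_AC_B (C : numClosedFieldType) a b c (psi : 'cV[C]_(a * b * c)) :
  'cV[C]_(a * c * b) :=
  \col_u coefABC psi (mxtens_unindex (mxtens_unindex u).1).1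
                     (mxtens_unindex u).2
                     (mxtens_unindex (mxtens_unindex u).1).2.

Definition vec_AB_C (C : numClosedFieldType) a b c (psi : 'cV[C]_(a * b * c)) :
  'cV[C]_(a * b * c) :=
  \col_u coefABC psi (mxtens_unindex (mxtens_unindex u).1).1
                     (mxtens_unindex (mxtens_unindex u).1).2
                     (mxtens_unindex u).2.

Definition N_A_CB (C : numClosedFieldType) a b c (psi : 'cV[C]_(a * b * c)) : C :=
  negativity (pure_dm (vec_A_CB psi)).
Definition N_AC_B (C : numClosedFieldType) a b c (psi : 'cV[C]_(a * b * c)) : C :=
  negativity (pure_dm (vec_AC_B psi)).
Definition N_AB_C (C : numClosedFieldType) a b c (psi : 'cV[C]_(a * b * c)) : C :=
  negativity (pure_dm (vec_AB_C psi)).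

Definition unit_vector (C : numClosedFieldType) n (v : 'cV[C]_n) : Prop :=
  (adjmx v *m v) 0 0 = 1.

(* For a pure state psi of H_X (x) H_Y with coefficient matrix K, one has
   (rho^{T_X})^dagger rho^{T_X} = (K K^dagger) (x) (K^dagger K), so the trace
   norm of the partial transpose is (sum_k s_k)^2 for the Schmidt coefficients
   s_k, and N_{X:Y} = ((sum_k s_k)^2 - 1) / 2.  Comparing with the purity
   P_X = sum_k s_k^4 of the reduced state gives 2 N^2 >= 1 - P_X, with
   equality when X is a qubit.  For a tripartite pure state P_{AC} = P_B,
   and expanding the squared modulus of the antisymmetrization of
   psi (x) psi in the B and C slots gives P_B + P_C <= 1 + P_A.  When A is a
   qubit these combine to N_{A:CB}^2 <= N_{AC:B}^2 + N_{AB:C}^2.  For d_A >= 3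
   the state (|000> + |101> + |210>) / sqrt 3 has N_{A:CB} = 1 while
   N_{AC:B} = N_{AB:C} = sqrt 2 / 3. *)

From HB Require Import structures.
From mathcomp Require Import all_boot all_order all_algebra.
From mathcomp Require Import complex mxtens reals.
From mathcomp Require Import ring zify.
From Stdlib Require Import ClassicalEpsilon.
Set Implicit Arguments. Unset Strict Implicit. Unset Printing Implicit Defensive.
Import Order.TTheory GRing.Theory Num.Theory Num.Def.
Local Open Scope ring_scope.

Section ConjugateTranspose.
Variable C : numClosedFieldType.

Lemma adjmxE m n (A : 'M[C]_(m, n)) i j : adjmx A i j = (A j i)^*.
Proof. by rewrite mxE. Qed.

Lemma adjmxK m n (A : 'M[C]_(m, n)) : adjmx (adjmx A) = A.
Proof. by apply/matrixP=> i j; rewrite !mxE conjCK. Qed.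

Lemma adjmxM m n p (A : 'M[C]_(m, n)) (B : 'M[C]_(n, p)) :
  adjmx (A *m B) = adjmx B *m adjmx A.
Proof.
apply/matrixP=> i j; rewrite !mxE rmorph_sum; apply: eq_bigr=> k _.
by rewrite !mxE rmorphM mulrC.
Qed.

Lemma adjmxB m n (A B : 'M[C]_(m, n)) : adjmx (A - B) = adjmx A - adjmx B.
Proof. by apply/matrixP=> i j; rewrite !mxE rmorphB. Qed.

Lemma adjmxD m n (A B : 'M[C]_(m, n)) : adjmx (A + B) = adjmx A + adjmx B.
Proof. by apply/matrixP=> i j; rewrite !mxE rmorphD. Qed.

Lemma adjmxZ m n c (A : 'M[C]_(m, n)) : adjmx (c *: A) = c^* *: adjmx A.
Proof. by apply/matrixP=> i j; rewrite !mxE rmorphM. Qed.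

Lemma adjmx1 n : adjmx (1%:M : 'M[C]_n) = 1%:M.
Proof. by apply/matrixP=> i j; rewrite !mxE eq_sym rmorph_nat. Qed.

Lemma adjmx_diag n (d : 'rV[C]_n) : adjmx (diag_mx d) = diag_mx (map_mx conjC d).
Proof.
apply/matrixP=> i j; rewrite !mxE eq_sym.
by case: eqP => [->|_]; rewrite ?mulr1n ?mulr0n ?rmorph0.
Qed.

Lemma adjmx_trmxC m n (A : 'M[C]_(m, n)) : adjmx A = map_mx conjC A^T.
Proof. by apply/matrixP=> i j; rewrite !mxE. Qed.

Lemma adjmx_tens m n p q (A : 'M[C]_(m, n)) (B : 'M[C]_(p, q)) :
  adjmx (A *t B) = adjmx A *t adjmx B.
Proof. by rewrite !adjmx_trmxC trmx_tens map_mxT. Qed.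

Lemma adjmx_col m n (A : 'M[C]_(m, n)) k : adjmx (col k A) = row k (adjmx A).
Proof. by apply/matrixP=> i j; rewrite !mxE. Qed.

Lemma mulmx_adj_self_ge0 n (y : 'cV[C]_n) : 0 <= (adjmx y *m y) 0 0.
Proof.
by rewrite mxE; apply: sumr_ge0 => k _; rewrite mxE mulrC mul_conjC_ge0.
Qed.

Lemma mulmx_adj_self_eq0 n (y : 'cV[C]_n) : (adjmx y *m y) 0 0 = 0 -> y = 0.
Proof.
rewrite mxE => /eqP; rewrite psumr_eq0 => [/allP y0|k _]; last first.
  by rewrite mxE mulrC mul_conjC_ge0.
apply/matrixP=> k l; rewrite ord1 mxE.
by have := y0 k (mem_index_enum k); rewrite /= mxE mulrC mul_conjC_eq0 => /eqP.
Qed.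

Lemma psdmx_gram m n (Z : 'M[C]_(m, n)) : psdmx (Z *m adjmx Z).
Proof.
move=> x; have -> : adjmx x *m (Z *m adjmx Z) *m x =
    adjmx (adjmx Z *m x) *m (adjmx Z *m x) by rewrite adjmxM adjmxK !mulmxA.
exact: mulmx_adj_self_ge0.
Qed.

Lemma psdmx1 n : psdmx (1%:M : 'M[C]_n).
Proof. by move=> x; rewrite mulmx1 mulmx_adj_self_ge0. Qed.

End ConjugateTranspose.

Section PositiveSemidefinite.
Variable C : numClosedFieldType.

Definition mxform n (A : 'M[C]_n) (x y : 'cV[C]_n) := (adjmx x *m A *m y) 0 0.

Lemma mxformDl n (A : 'M[C]_n) x1 x2 y :
  mxform A (x1 + x2) y = mxform A x1 y + mxform A x2 y.
Proof. by rewrite /mxform adjmxD !mulmxDl mxE. Qed.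

Lemma mxformDr n (A : 'M[C]_n) x y1 y2 :
  mxform A x (y1 + y2) = mxform A x y1 + mxform A x y2.
Proof. by rewrite /mxform mulmxDr mxE. Qed.

Lemma mxformZl n (A : 'M[C]_n) c x y : mxform A (c *: x) y = c^* * mxform A x y.
Proof. by rewrite /mxform adjmxZ -!scalemxAl mxE. Qed.

Lemma mxformZr n (A : 'M[C]_n) c x y : mxform A x (c *: y) = c * mxform A x y.
Proof. by rewrite /mxform -scalemxAr mxE. Qed.

Lemma mxform_delta n (A : 'M[C]_n) i j :
  mxform A (delta_mx i 0) (delta_mx j 0) = A i j.
Proof.
rewrite /mxform; have -> : adjmx (delta_mx i 0 : 'cV[C]_n) = delta_mx 0 i.
  by apply/matrixP=> a b; rewrite !mxE rmorph_nat andbC.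
by rewrite -rowE -colE !mxE.
Qed.

Lemma conj_mxform n (A : 'M[C]_n) x y : (mxform A x y)^* = mxform (adjmx A) y x.
Proof. by rewrite /mxform -adjmxE !adjmxM adjmxK mulmxA. Qed.

(* Polarization: the real quadratic form of a PSD matrix recovers A i j from
   the four vectors e_i, e_j, e_i + e_j and e_i + 'i e_j. *)
Lemma psdmx_adj n (A : 'M[C]_n) : psdmx A -> adjmx A = A.
Proof.
move=> psdA; apply/matrixP=> i j; rewrite adjmxE.
have realA x : (mxform A x x)^* = mxform A x x by apply: geC0_conj; exact: psdA.
have e1 := realA (delta_mx i 0 + delta_mx j 0).
have e2 := realA (delta_mx i 0 + 'i *: delta_mx j 0).
have ei := realA (delta_mx i 0); have ej := realA (delta_mx j 0).
rewrite !(mxformDl, mxformDr, mxformZl, mxformZr, mxform_delta) in e1 e2 ei ej.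
rewrite !(rmorphD, rmorphM) /= ?ei ?ej in e1.
rewrite !(rmorphD, rmorphM, rmorphN) /= ?conjCi ?conjCK ?ei ?ej in e2.
rewrite ?rmorphN /= ?conjCi ?opprK in e2.
have i_neq0 : ('i : C) != 0 by rewrite -sqrf_eq0 sqrCi oppr_eq0 oner_eq0.
set s := A i j in e1 e2 *; set t := A j i in e1 e2 *.
set a := A i i in e1 e2; set b := A j j in e1 e2.
transitivity (((a + s^* + (t^* + b)) - a - b +
   ((a + - 'i * s^* + 'i * (t^* + - 'i * b)) - a + 'i * 'i * b) / 'i) / 2).
  by field.
by rewrite e1 e2; field.
Qed.

Lemma psdmx_mxform_eq0 n (A : 'M[C]_n) x :
  psdmx A -> mxform A x x = 0 -> A *m x = 0.
Proof.
move=> psdA Ax0; set y := A *m x.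
set a := (adjmx y *m y) 0 0; set c := mxform A y y.
have a_ge0 : 0 <= a by exact: mulmx_adj_self_ge0.
have c_ge0 : 0 <= c by exact: psdA.
have Ayx : mxform A y x = a by rewrite /mxform -mulmxA.
have Axy : mxform A x y = a.
  by rewrite -[LHS]conjCK conj_mxform psdmx_adj // Ayx geC0_conj.
have c1_neq0 : c + 1 != 0 by rewrite gt_eqF // ltr_wpDl.
(* At x + t y the form equals - a^2 (c + 2) / (c + 1)^2, so a = |A x|^2 = 0. *)
set t := - (a / (c + 1)).
have conj_t : t^* = t by rewrite /t rmorphN /= geC0_conj // divr_ge0 // addr_ge0.
have := psdA (x + t *: y); rewrite -/(mxform A _ _).
rewrite !(mxformDl, mxformDr, mxformZl, mxformZr) Ax0 Ayx Axy conj_t -/c.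
have -> : 0 + t * a + (t * a + t * (t * c)) =
    - (a ^+ 2 * (c + 2%:R) / (c + 1) ^+ 2) by rewrite /t; field.
rewrite oppr_ge0 => le0.
have ge0 : 0 <= a ^+ 2 * (c + 2%:R) / (c + 1) ^+ 2.
  by rewrite divr_ge0 ?exprn_ge0 ?mulr_ge0 ?addr_ge0 ?ler0n.
have : a ^+ 2 * (c + 2%:R) / (c + 1) ^+ 2 = 0 by apply/le_anti; rewrite le0 ge0.
have c2_neq0 : c + 2%:R != 0 by rewrite gt_eqF // ltr_wpDl.
move/eqP; rewrite !mulf_eq0 invr_eq0 !expf_eq0 /= (negPf c1_neq0) (negPf c2_neq0).
rewrite !orbF orbb => /eqP; exact: mulmx_adj_self_eq0.
Qed.

End PositiveSemidefinite.

Section SquareRoot.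
Variable C : numClosedFieldType.

Lemma mxtrace_adj_conj n (H X : 'M[C]_n) :
  \tr (adjmx H *m X *m H) = \sum_k mxform X (col k H) (col k H).
Proof.
apply: eq_bigr => k _.
have entry (M : 'M[C]_n) :
    ((delta_mx 0 k : 'rV_n) *m M *m (delta_mx k 0 : 'cV_n)) 0 0 = M k k.
  by rewrite -rowE -colE !mxE.
by rewrite /mxform adjmx_col rowE colE -entry !mulmxA.
Qed.

Lemma mxtrace_adj_conj_ge0 n (H X : 'M[C]_n) :
  psdmx X -> 0 <= \tr (adjmx H *m X *m H).
Proof. by move=> psdX; rewrite mxtrace_adj_conj; apply: sumr_ge0 => k _; exact: psdX. Qed.

Lemma mxtrace_adj_conj_eq0 n (H X : 'M[C]_n) :
  psdmx X -> \tr (adjmx H *m X *m H) = 0 -> X *m H = 0.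
Proof.
move=> psdX; rewrite mxtrace_adj_conj => /eqP.
rewrite psumr_eq0 => [/allP XH0|k _]; last exact: psdX.
apply/matrixP => i k; have /eqP := XH0 k (mem_index_enum k).
move/(psdmx_mxform_eq0 psdX)/matrixP/(_ i 0).
by rewrite colE mulmxA -colE !mxE.
Qed.

(* With H := A - B, the hypothesis makes H anticommute with A + B, so
   tr (H (A + B) H) vanishes; positivity then kills H A H and H B H. *)
Lemma psdmx_sqr_inj n (A B : 'M[C]_n) :
  psdmx A -> psdmx B -> A *m A = B *m B -> A = B.
Proof.
move=> psdA psdB AB; set H := A - B.
have adjH : adjmx H = H by rewrite adjmxB !psdmx_adj.
have anti : H *m (A + B) = - ((A + B) *m H).
  apply/eqP; rewrite -addr_eq0; apply/eqP.
  rewrite /H mulmxBl mulmxBr !mulmxDr !mulmxDl AB.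
  set p := B *m B; set q := B *m A; set r := A *m B.
  by rewrite !opprD !addrA !subrK addrK subrr.
set T := \tr (H *m (A + B) *m H).
have T0 : T = 0.
  have : T = - T by rewrite {1}/T mxtrace_mulC anti mulmxN linearN /= mulmxA.
  by move/eqP; rewrite -addr_eq0 -mulr2n mulrn_eq0 /= => /eqP.
have TAB : T = \tr (adjmx H *m A *m H) + \tr (adjmx H *m B *m H).
  by rewrite /T adjH (mulmxDr H A B) mulmxDl mxtraceD.
have : \tr (adjmx H *m A *m H) + \tr (adjmx H *m B *m H) == 0 by rewrite -TAB T0.
rewrite paddr_eq0 ?mxtrace_adj_conj_ge0 // => /andP [/eqP HAH0 /eqP HBH0].
have HH0 : H *m H = 0.
  by rewrite {1}/H mulmxBl (mxtrace_adj_conj_eq0 psdA HAH0)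
    (mxtrace_adj_conj_eq0 psdB HBH0) subrr.
have : \tr (adjmx H *m 1%:M *m H) = 0 by rewrite mulmx1 adjH HH0 linear0.
by move/(mxtrace_adj_conj_eq0 (@psdmx1 _ n)); rewrite mul1mx => /eqP; rewrite subr_eq0 => /eqP.
Qed.

Lemma mxsqrt_psd n (S M : 'M[C]_n) : psdmx S -> S *m S = M -> mxsqrt M = S.
Proof.
move=> psdS SSM.
have [psd_sqrt sqrtK] := epsilon_spec (inhabits 0)
  (fun P : 'M[C]_n => psdmx P /\ P *m P = M) (ex_intro _ S (conj psdS SSM)).
by apply: psdmx_sqr_inj => //; rewrite sqrtK SSM.
Qed.

Lemma trace_norm_psd n (X S : 'M[C]_n) :
  psdmx S -> S *m S = adjmx X *m X -> trace_norm X = \tr S.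
Proof. by move=> psdS SSX; rewrite /trace_norm (mxsqrt_psd psdS SSX). Qed.
End SquareRoot.

Lemma sum_mxtens_index (V : nmodType) m n (F : 'I_(m * n) -> V) :
  \sum_u F u = \sum_i \sum_j F (mxtens_index (i, j)).
Proof.
rewrite (reindex (@mxtens_index m n)) /=; last first.
  by exists (@mxtens_unindex m n) => u _; rewrite (mxtens_indexK, mxtens_unindexK).
by rewrite pair_big; apply: eq_bigr => -[i j] _.
Qed.

Lemma mxtrace_tens (R : comPzRingType) m n (A : 'M[R]_m) (B : 'M[R]_n) :
  \tr (A *t B) = \tr A * \tr B.
Proof.
rewrite /mxtrace sum_mxtens_index big_distrlr /=; apply: eq_bigr => i _.
by apply: eq_bigr => j _; rewrite tensmxE.
Qed.

Section PartialTransposePure.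
Variable C : numClosedFieldType.

(* With K := conj_coefmx psi, K K^dagger and K^dagger K are the transposed
   reduced density matrices of |psi><psi| on X and on Y. *)
Definition conj_coefmx m n (psi : 'cV[C]_(m * n)) : 'M[C]_(m, n) :=
  \matrix_(i, j) (psi (mxtens_index (i, j)) 0)^*.

Lemma ptransposeX_pure_gram m n (psi : 'cV[C]_(m * n)) :
  let H := ptransposeX (pure_dm psi) in let K := conj_coefmx psi in
  adjmx H *m H = (K *m adjmx K) *t (adjmx K *m K).
Proof.
move=> H K; apply/matrixP => u v.
case: (mxtens_indexP u) => i j; case: (mxtens_indexP v) => i2 j2.
rewrite tensmxE !mxE sum_mxtens_index big_distrlr /= exchange_big /=.
apply: eq_bigr => l _; apply: eq_bigr => k _.
rewrite !mxE !mxtens_indexK /= !big_ord1 !mxE /=.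
by rewrite !rmorphM /= !conjCK -[ord0]/(0 : 'I_1); ring.
Qed.

(* Both square roots are given as Gram matrices, so that their tensor product
   is again a Gram matrix and hence positive semidefinite. *)
Lemma trace_norm_ptransposeX_pure m n p q (psi : 'cV[C]_(m * n))
    (Zp : 'M[C]_(m, p)) (Zq : 'M[C]_(n, q)) :
  let K := conj_coefmx psi in
  (Zp *m adjmx Zp) *m (Zp *m adjmx Zp) = K *m adjmx K ->
  (Zq *m adjmx Zq) *m (Zq *m adjmx Zq) = adjmx K *m K ->
  trace_norm (ptransposeX (pure_dm psi)) = \tr (Zp *m adjmx Zp) * \tr (Zq *m adjmx Zq).
Proof.
move=> K Zp_sqrt Zq_sqrt; rewrite -mxtrace_tens; apply: trace_norm_psd.
  have -> : (Zp *m adjmx Zp) *t (Zq *m adjmx Zq) = (Zp *t Zq) *m adjmx (Zp *t Zq).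
    by rewrite adjmx_tens tensmx_mul.
  exact: psdmx_gram.
by rewrite tensmx_mul Zp_sqrt Zq_sqrt ptransposeX_pure_gram.
Qed.

End PartialTransposePure.

Section SpectralSquareRoots.
Variable C : numClosedFieldType.

Lemma hermitian_spectral n (A : 'M[C]_n) : adjmx A = A ->
  exists (U : 'M[C]_n) (lam : 'rV[C]_n),
    [/\ U *m adjmx U = 1%:M, adjmx U *m U = 1%:M & A = adjmx U *m diag_mx lam *m U].
Proof.
move=> adjA; have unitU := spectral_unitarymx A.
have UU' : spectralmx A *m adjmx (spectralmx A) = 1%:M.
  by move/unitarymxP: unitU; rewrite -adjmx_trmxC.
have invU : invmx (spectralmx A) = adjmx (spectralmx A).
  by rewrite invmx_unitary // -adjmx_trmxC.
have normalA : A \is normalmx by apply/normalmxP; rewrite -adjmx_trmxC adjA.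
exists (spectralmx A), (spectral_diag A); split => //.
  by rewrite -invU mulVmx // spectral_unit.
by rewrite -invU; apply/orthomx_spectralP.
Qed.

Lemma mulmx_adj_conj m n (W : 'M[C]_(m, n)) (D1 D2 : 'M[C]_m) :
  (adjmx W *m D1 *m W) *m (adjmx W *m D2 *m W) =
  adjmx W *m (D1 *m (W *m adjmx W) *m D2) *m W.
Proof. by rewrite !mulmxA. Qed.

Lemma gram_diag m n (Z : 'M[C]_(m, n)) (d : 'rV[C]_n) : (forall k, 0 <= d 0 k) ->
  (Z *m diag_mx d) *m adjmx (Z *m diag_mx d) =
  Z *m diag_mx (\row_k (d 0 k ^+ 2)) *m adjmx Z.
Proof.
move=> d_ge0; rewrite adjmxM adjmx_diag !mulmxA -[Z *m _ *m _]mulmxA mulmx_diag.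
by congr (_ *m diag_mx _ *m _); apply/matrixP => i j; rewrite !mxE geC0_conj // expr2.
Qed.

Section GramSquareRoots.
Variables (m n : nat) (K : 'M[C]_(m, n)) (U : 'M[C]_m) (lam : 'rV[C]_m).
Hypotheses (UU' : U *m adjmx U = 1%:M) (U'U : adjmx U *m U = 1%:M)
  (KK' : K *m adjmx K = adjmx U *m diag_mx lam *m U).

Let W := U *m K.

Lemma gram_rotated : W *m adjmx W = diag_mx lam.
Proof.
rewrite /W adjmxM !mulmxA -[U *m K *m adjmx K]mulmxA KK'.
by rewrite !mulmxA UU' mul1mx -mulmxA UU' mulmx1.
Qed.

Lemma eigen_ge0 k : 0 <= lam 0 k.
Proof.
have -> : lam 0 k = (W *m adjmx W) k k by rewrite gram_rotated mxE eqxx mulr1n.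
by rewrite mxE; apply: sumr_ge0 => l _; rewrite adjmxE mul_conjC_ge0.
Qed.

Lemma rotated_eq0 k l : lam 0 k = 0 -> W k l = 0.
Proof.
move=> lam0; have : (W *m adjmx W) k k = 0 by rewrite gram_rotated mxE eqxx mulr1n.
rewrite mxE => /eqP; rewrite psumr_eq0 => [/allP W0|j _]; last first.
  by rewrite adjmxE mul_conjC_ge0.
by have := W0 l (mem_index_enum l); rewrite /= adjmxE mul_conjC_eq0 => /eqP.
Qed.

(* S1 = U^dagger Lam^(1/2) U and S2 = W^dagger Lam^(-1/2) W are the square
   roots of K K^dagger and K^dagger K; rows of W outside the support of Lam
   vanish, so Lam^(-1/2) Lam Lam^(-1/2) acts on W as the identity. *)
Let Zp := adjmx U *m diag_mx (\row_k sqrtC (sqrtC (lam 0 k))).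
Let Zq := adjmx W *m diag_mx (\row_k sqrtC (sqrtC (lam 0 k))^-1).

Lemma gram_sqrtL : Zp *m adjmx Zp = adjmx U *m diag_mx (\row_k sqrtC (lam 0 k)) *m U.
Proof.
rewrite /Zp gram_diag => [|k]; last by rewrite mxE !sqrtC_ge0 eigen_ge0.
by rewrite adjmxK; congr (_ *m diag_mx _ *m _); apply/matrixP => i j; rewrite !mxE sqrtCK.
Qed.

Lemma gram_sqrtR :
  Zq *m adjmx Zq = adjmx W *m diag_mx (\row_k (sqrtC (lam 0 k))^-1) *m W.
Proof.
rewrite /Zq gram_diag => [|k]; last by rewrite mxE sqrtC_ge0 invr_ge0 sqrtC_ge0 eigen_ge0.
by rewrite adjmxK; congr (_ *m diag_mx _ *m _); apply/matrixP => i j; rewrite !mxE sqrtCK.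
Qed.

Lemma gram_sqrtLK : (Zp *m adjmx Zp) *m (Zp *m adjmx Zp) = K *m adjmx K.
Proof.
rewrite gram_sqrtL KK' mulmx_adj_conj UU' mulmx1 mulmx_diag.
congr (_ *m diag_mx _ *m _); apply/matrixP => i j.
by rewrite !mxE (ord1 i) -expr2 sqrtCK.
Qed.

Lemma gram_sqrtRK : (Zq *m adjmx Zq) *m (Zq *m adjmx Zq) = adjmx K *m K.
Proof.
rewrite gram_sqrtR (mulmx_adj_conj W) gram_rotated !mulmx_diag -mulmxA.
set D := diag_mx _; have -> : D *m W = W.
  rewrite /D mul_diag_mx; apply/matrixP => i j; rewrite mxE.
  have [lam0|lam_neq0] := eqVneq (lam 0 i) 0; first by rewrite (rotated_eq0 j lam0) mulr0.
  have s_neq0 : sqrtC (lam 0 i) != 0 by rewrite sqrtC_eq0.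
  set w := W i j; rewrite !mxE -{2}(sqrtCK (lam 0 i)) expr2.
  by rewrite mulrA mulVf // mul1r mulfV // mul1r.
by rewrite adjmxM -mulmxA (mulmxA (adjmx U)) U'U mul1mx.
Qed.

Lemma mxtrace_gram_sqrtL : \tr (Zp *m adjmx Zp) = \sum_k sqrtC (lam 0 k).
Proof.
rewrite gram_sqrtL mxtrace_mulC mulmxA UU' mul1mx mxtrace_diag.
by apply: eq_bigr => k _; rewrite mxE.
Qed.

Lemma mxtrace_gram_sqrtR : \tr (Zq *m adjmx Zq) = \sum_k sqrtC (lam 0 k).
Proof.
rewrite gram_sqrtR mxtrace_mulC mulmxA gram_rotated mulmx_diag mxtrace_diag.
apply: eq_bigr => k _; rewrite !mxE.
have [->|lam_neq0] := eqVneq (lam 0 k) 0; first by rewrite sqrtC0 mul0r.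
have s_neq0 : sqrtC (lam 0 k) != 0 by rewrite sqrtC_eq0.
by rewrite -{1}(sqrtCK (lam 0 k)) expr2 mulfK.
Qed.

Lemma gram_sqrt_exists : exists (Zp : 'M[C]_(m, m)) (Zq : 'M[C]_(n, m)),
  [/\ (Zp *m adjmx Zp) *m (Zp *m adjmx Zp) = K *m adjmx K,
      (Zq *m adjmx Zq) *m (Zq *m adjmx Zq) = adjmx K *m K,
      \tr (Zp *m adjmx Zp) = \sum_k sqrtC (lam 0 k) &
      \tr (Zq *m adjmx Zq) = \sum_k sqrtC (lam 0 k)].
Proof.
by exists Zp, Zq; split;
  [exact: gram_sqrtLK | exact: gram_sqrtRK | exact: mxtrace_gram_sqrtL | exact: mxtrace_gram_sqrtR].
Qed.

Lemma eigen_sums :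
  \sum_k lam 0 k = \tr (K *m adjmx K) /\
  \sum_k lam 0 k ^+ 2 = \tr ((K *m adjmx K) *m (K *m adjmx K)).
Proof.
rewrite KK' mulmx_adj_conj UU' mulmx1 mulmx_diag.
rewrite mxtrace_mulC mulmxA UU' mul1mx mxtrace_diag.
rewrite mxtrace_mulC mulmxA UU' mul1mx mxtrace_diag; split => //.
by apply: eq_bigr => k _; rewrite mxE expr2.
Qed.

End GramSquareRoots.

Lemma trace_norm_ptransposeX_pureL m n (psi : 'cV[C]_(m * n)) (U : 'M[C]_m) lam :
  U *m adjmx U = 1%:M -> adjmx U *m U = 1%:M ->
  conj_coefmx psi *m adjmx (conj_coefmx psi) = adjmx U *m diag_mx lam *m U ->
  trace_norm (ptransposeX (pure_dm psi)) = (\sum_k sqrtC (lam 0 k)) ^+ 2.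
Proof.
move=> UU' U'U KK'.
have [Zp [Zq [Zp_sqrt Zq_sqrt trZp trZq]]] := gram_sqrt_exists UU' U'U KK'.
by rewrite (trace_norm_ptransposeX_pure Zp_sqrt Zq_sqrt) trZp trZq expr2.
Qed.

Lemma trace_norm_ptransposeX_pureR m n (psi : 'cV[C]_(m * n)) (U : 'M[C]_n) lam :
  U *m adjmx U = 1%:M -> adjmx U *m U = 1%:M ->
  adjmx (conj_coefmx psi) *m conj_coefmx psi = adjmx U *m diag_mx lam *m U ->
  trace_norm (ptransposeX (pure_dm psi)) = (\sum_k sqrtC (lam 0 k)) ^+ 2.
Proof.
move=> UU' U'U; rewrite -{2}[conj_coefmx psi]adjmxK => K'K.
have [Zp [Zq [Zp_sqrt Zq_sqrt trZp trZq]]] := gram_sqrt_exists UU' U'U K'K.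
rewrite adjmxK in Zp_sqrt Zq_sqrt.
by rewrite (trace_norm_ptransposeX_pure Zq_sqrt Zp_sqrt) trZp trZq expr2.
Qed.

End SpectralSquareRoots.

Section SchmidtCoefficients.
Variable C : numClosedFieldType.

Definition cross_sum m (s : 'I_m -> C) := (\sum_k s k) ^+ 2 - \sum_k s k ^+ 2.

Definition purity m n (K : 'M[C]_(m, n)) := \tr ((K *m adjmx K) *m (K *m adjmx K)).

Lemma mxtrace_gramE m n (K : 'M[C]_(m, n)) :
  \tr (K *m adjmx K) = \sum_(q : 'I_m * 'I_n) K q.1 q.2 * (K q.1 q.2)^*.
Proof.
rewrite /mxtrace -(pair_bigA _ (fun x y => K x y * (K x y)^*)) /=.
by apply: eq_bigr => x _; rewrite mxE; apply: eq_bigr => y _; rewrite adjmxE.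
Qed.

Lemma purityE m n (K : 'M[C]_(m, n)) :
  purity K = \sum_(q : ('I_m * 'I_n) * ('I_m * 'I_n))
     K q.1.1 q.1.2 * (K q.2.1 q.1.2)^* * K q.2.1 q.2.2 * (K q.1.1 q.2.2)^*.
Proof.
pose G (q1 q2 : 'I_m * 'I_n) :=
  K q1.1 q1.2 * (K q2.1 q1.2)^* * K q2.1 q2.2 * (K q1.1 q2.2)^*.
transitivity (\sum_x \sum_x2 \sum_y \sum_y2 G (x, y) (x2, y2)).
  rewrite /purity /mxtrace; apply: eq_bigr => x _; rewrite mxE; apply: eq_bigr => x2 _.
  rewrite !mxE big_distrlr /=; apply: eq_bigr => y _; apply: eq_bigr => y2 _.
  by rewrite /G /= !adjmxE !mulrA.
transitivity (\sum_x \sum_y \sum_x2 \sum_y2 G (x, y) (x2, y2)).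
  by apply: eq_bigr => x _; rewrite exchange_big.
rewrite -(pair_bigA _ G) -(pair_bigA _ (fun x y => \sum_q2 G (x, y) q2)) /=.
apply: eq_bigr => x _; apply: eq_bigr => y _.
by rewrite -(pair_bigA _ (fun x2 y2 => G (x, y) (x2, y2))).
Qed.

Lemma cross_sum_ge0 m (s : 'I_m -> C) : (forall k, 0 <= s k) -> 0 <= cross_sum s.
Proof.
elim: m s => [|m IH] s s_ge0; first by rewrite /cross_sum !big_ord0 expr0n subrr.
have := IH (fun k => s (widen_ord (leqnSn m) k)) (fun k => s_ge0 _).
rewrite /cross_sum !big_ord_recr /=.
set S := \sum_(i < m) _; set Q := \sum_(i < m) _ => IH_ge0.
have -> : (S + s ord_max) ^+ 2 - (Q + s ord_max ^+ 2) = (S ^+ 2 - Q) + (s ord_max * S) *+ 2.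
  by ring.
by rewrite addr_ge0 // mulrn_wge0 // mulr_ge0 // sumr_ge0.
Qed.

Lemma cross_sum_sqr_le m (s : 'I_m -> C) : (forall k, 0 <= s k) ->
  cross_sum (fun k => s k ^+ 2) *+ 2 <= cross_sum s ^+ 2.
Proof.
elim: m s => [|m IH] s s_ge0.
  by rewrite /cross_sum !big_ord0 expr0n subrr expr0n mul0rn.
pose s' k := s (widen_ord (leqnSn m) k).
have s'_ge0 k : 0 <= s' k by exact: s_ge0.
have := IH s' s'_ge0; have := cross_sum_ge0 s'_ge0.
rewrite /cross_sum !big_ord_recr /= -/s'.
set S := \sum_(i < m) s' i; set Q := \sum_(i < m) s' i ^+ 2.
set P := \sum_(i < m) (s' i ^+ 2) ^+ 2; set x := s ord_max => E_ge0 IH_le.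
have x_ge0 : 0 <= x by exact: s_ge0.
have S_ge0 : 0 <= S by rewrite sumr_ge0.
rewrite -subr_ge0.
have -> : ((S + x) ^+ 2 - (Q + x ^+ 2)) ^+ 2 - ((Q + x ^+ 2) ^+ 2 - (P + (x ^+ 2) ^+ 2)) *+ 2 =
  ((S ^+ 2 - Q) ^+ 2 - (Q ^+ 2 - P) *+ 2) + (x * S * (S ^+ 2 - Q)) *+ 4
   + (x ^+ 2 * (S ^+ 2 - Q)) *+ 4 by ring.
apply: addr_ge0; first apply: addr_ge0; first by rewrite subr_ge0.
all: by rewrite mulrn_wge0 // ?mulr_ge0 ?exprn_ge0.
Qed.

Lemma cross_sum_sqr2 (s : 'I_2 -> C) :
  cross_sum (fun k => s k ^+ 2) *+ 2 = cross_sum s ^+ 2.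
Proof. rewrite /cross_sum !big_ord_recr !big_ord0 /=; ring. Qed.

Lemma negativity_pure_schmidt m n (psi : 'cV[C]_(m * n)) :
  let K := conj_coefmx psi in \tr (K *m adjmx K) = 1 ->
  exists s : 'I_m -> C, [/\ forall k, 0 <= s k,
    negativity (pure_dm psi) = cross_sum s / 2%:R,
    \sum_k s k ^+ 2 = 1 &
    \sum_k (s k ^+ 2) ^+ 2 = purity K].
Proof.
move=> K trK.
have KK'_herm : adjmx (K *m adjmx K) = K *m adjmx K by rewrite adjmxM adjmxK.
have [U [lam [UU' U'U KK']]] := hermitian_spectral KK'_herm.
have [sum_lam sum_lam2] := eigen_sums UU' KK'.
have sum_s2 : \sum_k sqrtC (lam 0 k) ^+ 2 = 1.
  by rewrite -trK -sum_lam; apply: eq_bigr => k _; rewrite sqrtCK.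
exists (fun k => sqrtC (lam 0 k)); split => //.
- by move=> k; rewrite sqrtC_ge0 (eigen_ge0 UU' KK').
- by rewrite /negativity (trace_norm_ptransposeX_pureL UU' U'U KK') /cross_sum sum_s2.
- by rewrite /purity -sum_lam2; apply: eq_bigr => k _; rewrite sqrtCK.
Qed.

Lemma negativity_pure_bound m n (psi : 'cV[C]_(m * n)) :
  let K := conj_coefmx psi in \tr (K *m adjmx K) = 1 ->
  0 <= negativity (pure_dm psi) /\
  1 - purity K <= negativity (pure_dm psi) ^+ 2 *+ 2.
Proof.
move=> K trK; have [s [s_ge0 -> sum_s2 <-]] := negativity_pure_schmidt trK.
have := cross_sum_sqr_le s_ge0; rewrite {1}/cross_sum sum_s2 expr1n.
split; first by rewrite divr_ge0 ?ler0n ?cross_sum_ge0.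
have -> : (cross_sum s / 2%:R) ^+ 2 *+ 2 = cross_sum s ^+ 2 / 2%:R.
  by rewrite -mulr_natr; field.
by rewrite ler_pdivlMr ?ltr0n // mulr_natr.
Qed.

Lemma negativity_pure_qubit n (psi : 'cV[C]_(2 * n)) :
  let K := conj_coefmx psi in \tr (K *m adjmx K) = 1 ->
  negativity (pure_dm psi) ^+ 2 *+ 2 = 1 - purity K.
Proof.
move=> K trK; have [s [_ -> sum_s2 <-]] := negativity_pure_schmidt trK.
have := cross_sum_sqr2 s; rewrite {1}/cross_sum sum_s2 expr1n => cross_sqr.
rewrite expr_div_n -cross_sqr; move: (1 - _) => x.
by rewrite -[x *+ 2]mulr_natr -[LHS]mulr_natr; field.
Qed.

End SchmidtCoefficients.

Section SwapOverlaps.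
Variables (C : numClosedFieldType) (I J L : finType) (phi : I * J * L -> C).

Local Notation T := (I * J * L)%type.

Definition swapB (t : T * T) : T * T :=
  let: ((i, j, k), (i2, j2, k2)) := t in ((i, j2, k), (i2, j, k2)).
Definition swapC (t : T * T) : T * T :=
  let: ((i, j, k), (i2, j2, k2)) := t in ((i, j, k2), (i2, j2, k)).

Definition overlap (s : T * T -> T * T) :=
  \sum_t (phi t.1 * phi t.2)^* * (phi (s t).1 * phi (s t).2).

Lemma swapBK : involutive swapB. Proof. by case=> [[[i j] k] [[i2 j2] k2]]. Qed.
Lemma swapCK : involutive swapC. Proof. by case=> [[[i j] k] [[i2 j2] k2]]. Qed.
Lemma swapBC t : swapB (swapC t) = swapC (swapB t).
Proof. by case: t => [[[i j] k] [[i2 j2] k2]]. Qed.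

(* alt is the antisymmetrization of phi (x) phi in the B and in the C slot;
   the sum of its squared moduli is four times the defect of the inequality. *)
Let Phi t := phi t.1 * phi t.2.
Let alt t := Phi t - Phi (swapB t) - Phi (swapC t) + Phi (swapB (swapC t)).

Lemma alt_swapB t : alt (swapB t) = - alt t.
Proof. by rewrite /alt swapBK (swapBC (swapB t)) swapBK -(swapBC t); ring. Qed.

Lemma alt_swapC t : alt (swapC t) = - alt t.
Proof. by rewrite /alt swapCK; ring. Qed.

Lemma sum_involutive (s : T * T -> T * T) (F : T * T -> C) :
  involutive s -> \sum_t F (s t) = \sum_t F t.
Proof. by move=> sK; rewrite [RHS](reindex_inj (can_inj sK)). Qed.

Lemma sum_sqr_alt :
  \sum_t (alt t)^* * alt t =
  (overlap id - overlap swapB - overlap swapC + overlap (swapB \o swapC)) *+ 4.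
Proof.
have swap_alt s : involutive s -> \sum_t (Phi (s t))^* * alt t = \sum_t (Phi t)^* * alt (s t).
  by move=> sK; rewrite -(sum_involutive (fun t => (Phi t)^* * alt (s t)) sK);
    apply: eq_bigr => t _; rewrite sK.
have swapBCK : involutive (swapB \o swapC) by move=> t /=; rewrite swapBC swapBK swapCK.
transitivity (\sum_t (Phi t)^* * alt t - \sum_t (Phi (swapB t))^* * alt t
   - \sum_t (Phi (swapC t))^* * alt t + \sum_t (Phi (swapB (swapC t)))^* * alt t).
  rewrite -!sumrB -big_split /=; apply: eq_bigr => t _.
  by rewrite {1}/alt !rmorphD !rmorphN /=; ring.
rewrite (swap_alt _ swapBK) (swap_alt _ swapCK) (swap_alt _ swapBCK) /=.
under [in X in _ - X - _ + _]eq_bigr do rewrite alt_swapB.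
under [in X in _ - _ - X + _]eq_bigr do rewrite alt_swapC.
under [in X in _ - _ - _ + X]eq_bigr do rewrite alt_swapB alt_swapC opprK.
rewrite /overlap -!sumrB -!big_split /= -sumrMnl; apply: eq_bigr => t _.
by rewrite /alt /Phi /=; ring.
Qed.

Lemma overlap_swap_le :
  overlap swapB + overlap swapC <= overlap id + overlap (swapB \o swapC).
Proof.
have : 0 <= \sum_t (alt t)^* * alt t.
  by apply: sumr_ge0 => t _; rewrite mulrC mul_conjC_ge0.
rewrite sum_sqr_alt pmulrn_lge0 // => defect_ge0; rewrite -subr_ge0.
move: defect_ge0; set a := overlap id; set b := overlap swapB; set c := overlap swapC; set d := overlap _.
by have -> : a + d - (b + c) = a - b - c + d by ring.
Qed.

Lemma overlap_id : overlap id = (\sum_p (phi p)^* * phi p) ^+ 2.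
Proof.
rewrite /overlap expr2 big_distrlr /= pair_bigA /=; apply: eq_bigr => -[p1 p2] _.
by rewrite /= rmorphM /=; ring.
Qed.

Lemma purity_overlap m n (K : 'M[C]_(m, n)) (f : 'I_m * 'I_n -> T) (s : T * T -> T * T) :
  bijective f -> (forall x y, K x y = (phi (f (x, y)))^*) ->
  (forall x1 y1 x2 y2, s (f (x1, y1), f (x2, y2)) = (f (x1, y2), f (x2, y1))) ->
  purity K = overlap s.
Proof.
move=> [g fK gK] Kf sf; rewrite purityE /overlap.
rewrite (reindex (fun q => (f q.1, f q.2))) /=; last first.
  by exists (fun t => (g t.1, g t.2)) => -[u v] _ /=; rewrite ?fK ?gK.
apply: eq_bigr => -[[x1 y1] [x2 y2]] _ /=; rewrite sf !Kf /= !rmorphM /= !conjCK.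
ring.
Qed.

Lemma mxtrace_gram_sum m n (K : 'M[C]_(m, n)) (f : 'I_m * 'I_n -> T) :
  bijective f -> (forall x y, K x y = (phi (f (x, y)))^*) ->
  \tr (K *m adjmx K) = \sum_p (phi p)^* * phi p.
Proof.
move=> [g fK gK] Kf; rewrite mxtrace_gramE (reindex f) /=; last by exists g.
by apply: eq_bigr => -[x y] _; rewrite Kf conjCK mulrC.
Qed.

End SwapOverlaps.

Arguments swapB {I J L}.
Arguments swapC {I J L}.

Definition coef3 (C : numClosedFieldType) a b c (psi : 'cV[C]_(a * b * c))
  (p : 'I_a * 'I_b * 'I_c) := coefABC psi p.1.1 p.1.2 p.2.

Section TripartiteCuts.
Variables (C : numClosedFieldType) (a b c : nat) (psi : 'cV[C]_(a * b * c)).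

Local Notation coef := (coef3 psi).

Lemma sum_sqr_coef3 : \sum_p (coef p)^* * coef p = (adjmx psi *m psi) 0 0.
Proof.
rewrite mxE (reindex (fun p => mxtens_index (mxtens_index (p.1.1, p.1.2), p.2))) /=.
  by apply: eq_bigr => -[[i j] k] _; rewrite adjmxE.
exists (fun u => ((mxtens_unindex (mxtens_unindex u).1).1,
                  (mxtens_unindex (mxtens_unindex u).1).2, (mxtens_unindex u).2)).
  by move=> [[i j] k] _; rewrite !mxtens_indexK.
move=> u _; case: (mxtens_indexP u) => x k; case: (mxtens_indexP x) => i j.
by rewrite !mxtens_indexK.
Qed.

Definition idx_A_CB (q : 'I_a * 'I_(c * b)) : 'I_a * 'I_b * 'I_c :=
  (q.1, (mxtens_unindex q.2).2, (mxtens_unindex q.2).1).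
Definition idx_AC_B (q : 'I_(a * c) * 'I_b) : 'I_a * 'I_b * 'I_c :=
  ((mxtens_unindex q.1).1, q.2, (mxtens_unindex q.1).2).
Definition idx_AB_C (q : 'I_(a * b) * 'I_c) : 'I_a * 'I_b * 'I_c :=
  ((mxtens_unindex q.1).1, (mxtens_unindex q.1).2, q.2).

Lemma idx_A_CB_bij : bijective idx_A_CB.
Proof.
exists (fun p => (p.1.1, mxtens_index (p.2, p.1.2))) => [[i y]|[[i j] k]].
  by case: (mxtens_indexP y) => k j; rewrite /idx_A_CB mxtens_indexK.
by rewrite /idx_A_CB mxtens_indexK.
Qed.

Lemma idx_AC_B_bij : bijective idx_AC_B.
Proof.
exists (fun p => (mxtens_index (p.1.1, p.2), p.1.2)) => [[x j]|[[i j] k]].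
  by case: (mxtens_indexP x) => i k; rewrite /idx_AC_B mxtens_indexK.
by rewrite /idx_AC_B mxtens_indexK.
Qed.

Lemma idx_AB_C_bij : bijective idx_AB_C.
Proof.
exists (fun p => (mxtens_index (p.1.1, p.1.2), p.2)) => [[x k]|[[i j] k]].
  by case: (mxtens_indexP x) => i j; rewrite /idx_AB_C mxtens_indexK.
by rewrite /idx_AB_C mxtens_indexK.
Qed.

Lemma conj_coefmx_A_CB x y :
  conj_coefmx (vec_A_CB psi) x y = (coef (idx_A_CB (x, y)))^*.
Proof. by rewrite !mxE mxtens_indexK. Qed.

Lemma conj_coefmx_AC_B x y :
  conj_coefmx (vec_AC_B psi) x y = (coef (idx_AC_B (x, y)))^*.
Proof. by rewrite !mxE mxtens_indexK. Qed.

Lemma conj_coefmx_AB_C x y :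
  conj_coefmx (vec_AB_C psi) x y = (coef (idx_AB_C (x, y)))^*.
Proof. by rewrite !mxE mxtens_indexK. Qed.

Lemma gram_A_CB : let K := conj_coefmx (vec_A_CB psi) in
  \tr (K *m adjmx K) = (adjmx psi *m psi) 0 0 /\
  purity K = overlap coef (swapB \o swapC).
Proof.
have Kf := conj_coefmx_A_CB; split; first by rewrite (mxtrace_gram_sum idx_A_CB_bij Kf) sum_sqr_coef3.
exact: (purity_overlap idx_A_CB_bij Kf (fun _ _ _ _ => erefl)).
Qed.

Lemma gram_AC_B : let K := conj_coefmx (vec_AC_B psi) in
  \tr (K *m adjmx K) = (adjmx psi *m psi) 0 0 /\ purity K = overlap coef swapB.
Proof.
have Kf := conj_coefmx_AC_B; split; first by rewrite (mxtrace_gram_sum idx_AC_B_bij Kf) sum_sqr_coef3.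
exact: (purity_overlap idx_AC_B_bij Kf (fun _ _ _ _ => erefl)).
Qed.

Lemma gram_AB_C : let K := conj_coefmx (vec_AB_C psi) in
  \tr (K *m adjmx K) = (adjmx psi *m psi) 0 0 /\ purity K = overlap coef swapC.
Proof.
have Kf := conj_coefmx_AB_C; split; first by rewrite (mxtrace_gram_sum idx_AB_C_bij Kf) sum_sqr_coef3.
exact: (purity_overlap idx_AB_C_bij Kf (fun _ _ _ _ => erefl)).
Qed.

Lemma purity_cuts_le :
  purity (conj_coefmx (vec_AC_B psi)) + purity (conj_coefmx (vec_AB_C psi)) <=
  ((adjmx psi *m psi) 0 0) ^+ 2 + purity (conj_coefmx (vec_A_CB psi)).
Proof.
rewrite (proj2 gram_A_CB) (proj2 gram_AC_B) (proj2 gram_AB_C) -sum_sqr_coef3 -overlap_id.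
exact: overlap_swap_le.
Qed.

Lemma adj_gram_A_CB k j k2 j2 :
  (adjmx (conj_coefmx (vec_A_CB psi)) *m conj_coefmx (vec_A_CB psi))
    (mxtens_index (k, j)) (mxtens_index (k2, j2)) =
  \sum_i coef (i, j, k) * (coef (i, j2, k2))^*.
Proof.
rewrite mxE; apply: eq_bigr => i _.
by rewrite adjmxE !conj_coefmx_A_CB /idx_A_CB !mxtens_indexK conjCK.
Qed.

Lemma adj_gram_AC_B j j2 :
  (adjmx (conj_coefmx (vec_AC_B psi)) *m conj_coefmx (vec_AC_B psi)) j j2 =
  \sum_i \sum_k coef (i, j, k) * (coef (i, j2, k))^*.
Proof.
rewrite mxE sum_mxtens_index; apply: eq_bigr => i _; apply: eq_bigr => k _.
by rewrite adjmxE !conj_coefmx_AC_B /idx_AC_B !mxtens_indexK conjCK.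
Qed.

Lemma adj_gram_AB_C k k2 :
  (adjmx (conj_coefmx (vec_AB_C psi)) *m conj_coefmx (vec_AB_C psi)) k k2 =
  \sum_i \sum_j coef (i, j, k) * (coef (i, j, k2))^*.
Proof.
rewrite mxE sum_mxtens_index; apply: eq_bigr => i _; apply: eq_bigr => j _.
by rewrite adjmxE !conj_coefmx_AB_C /idx_AB_C !mxtens_indexK conjCK.
Qed.

End TripartiteCuts.

Lemma le_add_of_sqr_bounds (C : numClosedFieldType) (x y z pA pB pC : C) :
  0 <= x -> 0 <= y -> 0 <= z ->
  x ^+ 2 *+ 2 = 1 - pA -> 1 - pB <= y ^+ 2 *+ 2 -> 1 - pC <= z ^+ 2 *+ 2 ->
  pB + pC <= 1 + pA -> x <= y + z.
Proof.
move=> x_ge0 y_ge0 z_ge0 xA yB zC pBC.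
have : x ^+ 2 *+ 2 <= (y ^+ 2 + z ^+ 2) *+ 2.
  rewrite xA mulrnDl; apply: le_trans (lerD yB zC).
  have -> : 1 - pB + (1 - pC) = (1 + 1) - (pB + pC) by ring.
  by rewrite -[1 - pA](addrKA 1) lerB.
rewrite ler_pMn2r // => x2_le.
have yz2_le : y ^+ 2 + z ^+ 2 <= (y + z) ^+ 2.
  by rewrite sqrrD -addrA lerD2l -{1}[z ^+ 2]add0r lerD2r mulrn_wge0 ?mulr_ge0.
by rewrite -ler_sqr ?nnegrE ?addr_ge0 // (le_trans x2_le yz2_le).
Qed.

Lemma qubit_negativity_monogamy (C : numClosedFieldType) dB dC
    (psi : 'cV[C]_(2 * dB * dC)) :
  unit_vector psi -> N_A_CB psi <= N_AC_B psi + N_AB_C psi.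
Proof.
rewrite /unit_vector => psi1.
have [trA _] := gram_A_CB psi; have [trB _] := gram_AC_B psi.
have [trC _] := gram_AB_C psi; rewrite psi1 in trA trB trC.
have [NA_ge0 _] := negativity_pure_bound trA.
have [NB_ge0 NB_bound] := negativity_pure_bound trB.
have [NC_ge0 NC_bound] := negativity_pure_bound trC.
apply: (le_add_of_sqr_bounds NA_ge0 NB_ge0 NC_ge0 (negativity_pure_qubit trA) NB_bound NC_bound).
by have := purity_cuts_le psi; rewrite psi1 expr1n.
Qed.

Lemma trace_norm_ptransposeX_pure_diag (C : numClosedFieldType) m n
    (psi : 'cV[C]_(m * n)) :
  let G := adjmx (conj_coefmx psi) *m conj_coefmx psi in
  (forall y y', y != y' -> G y y' = 0) ->
  trace_norm (ptransposeX (pure_dm psi)) = (\sum_y sqrtC (G y y)) ^+ 2.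
Proof.
move=> G G_diag; pose lam := \row_y G y y.
have -> : \sum_y sqrtC (G y y) = \sum_y sqrtC (lam 0 y).
  by apply: eq_bigr => y _; rewrite /lam [in RHS]mxE.
apply: (@trace_norm_ptransposeX_pureR _ m n psi 1%:M lam);
  rewrite ?adjmx1 ?mulmx1 ?mul1mx //.
apply/matrixP => y y'; rewrite [in RHS]mxE /lam [in RHS]mxE.
by have [<-|/G_diag ->] := eqVneq y y'; rewrite ?mulr1n ?mulr0n.
Qed.

Section Counterexample.
Variables (C : numClosedFieldType) (dA : nat).
Hypothesis dA_ge3 : (3 <= dA)%N.

(* the support {(0,0,0), (1,0,1), (2,1,0)} of (|000> + |101> + |210>) / sqrt 3 *)
Definition w_support (i j k : nat) := (i == 2 * j + k) && (j * k == 0).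

Lemma w_support_inj i j k j2 k2 : (k < 2)%N -> (k2 < 2)%N ->
  w_support i j k -> w_support i j2 k2 -> j = j2 /\ k = k2.
Proof. by rewrite /w_support => k_lt2 k2_lt2 /andP[/eqP -> _] /andP[/eqP e _]; lia. Qed.

Let r : C := sqrtC 3%:R^-1.

Lemma r_ge0 : 0 <= r. Proof. by rewrite sqrtC_ge0 invr_ge0 ler0n. Qed.
Lemma r_sqr : r ^+ 2 = 3%:R^-1. Proof. exact: sqrtCK. Qed.

Definition w_state : 'cV[C]_(dA * 2 * 2) :=
  \col_u (r * (w_support (mxtens_unindex (mxtens_unindex u).1).1
                         (mxtens_unindex (mxtens_unindex u).1).2
                         (mxtens_unindex u).2)%:R).

Lemma coef3_w_state_mul p q :
  coef3 w_state p * (coef3 w_state q)^* =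
  r ^+ 2 * (w_support p.1.1 p.1.2 p.2 && w_support q.1.1 q.1.2 q.2 : nat)%:R.
Proof.
rewrite /coef3 /coefABC !mxE !mxtens_indexK /= rmorphM /= rmorph_nat (geC0_conj r_ge0).
by rewrite -mulnb natrM expr2 -!mulrA; congr (_ * _); rewrite mulrCA.
Qed.

Lemma sum_w_support (j j2 k k2 : 'I_2) :
  \sum_(i < dA) (w_support i j k && w_support i j2 k2 : nat)%:R =
  ((j == j2) && (k == k2) && (j * k == 0)%N : nat)%:R :> C.
Proof.
have [[<- <-]|ne] := altP (@eqP _ (j, k) (j2, k2)); last first.
  rewrite big1 => [|i _]; last first.
    case: (boolP (_ && _)) => [/andP[w1 w2]|//].
    have [/val_inj ej /val_inj ek] := w_support_inj (ltn_ord k) (ltn_ord k2) w1 w2.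
    by move: ne; rewrite ej ek eqxx.
  by rewrite -xpair_eqE (negPf ne).
rewrite !eqxx /=; under eq_bigr do rewrite andbb.
have [jk0|jk_neq0] := boolP (j * k == 0)%N; last first.
  by apply: big1 => i _; rewrite /w_support (negPf jk_neq0) andbF.
have lt_dA : (2 * j + k < dA)%N by move/eqP: jk0; have := ltn_ord j; have := ltn_ord k; nia.
rewrite (bigD1 (Ordinal lt_dA)) //= big1 ?addr0 => [|i ne_i].
  by rewrite /w_support eqxx jk0.
by rewrite /w_support -(inj_eq val_inj) /= in ne_i; rewrite /w_support (negPf ne_i).
Qed.

Local Notation K_A := (conj_coefmx (vec_A_CB w_state)).
Local Notation K_B := (conj_coefmx (vec_AC_B w_state)).
Local Notation K_C := (conj_coefmx (vec_AB_C w_state)).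

Lemma adj_gram_A_CB_w (k j k2 j2 : 'I_2) :
  (adjmx K_A *m K_A) (mxtens_index (k, j)) (mxtens_index (k2, j2)) =
  r ^+ 2 * ((j == j2) && (k == k2) && (j * k == 0)%N : nat)%:R.
Proof.
rewrite adj_gram_A_CB; under eq_bigr do rewrite coef3_w_state_mul /=.
by rewrite -mulr_sumr sum_w_support.
Qed.

Lemma adj_gram_AC_B_w (j j2 : 'I_2) :
  (adjmx K_B *m K_B) j j2 = r ^+ 2 * \sum_(k < 2) ((j == j2) && (j * k == 0)%N : nat)%:R.
Proof.
rewrite adj_gram_AC_B exchange_big /= mulr_sumr; apply: eq_bigr => k _.
under eq_bigr do rewrite coef3_w_state_mul /=.
by rewrite -mulr_sumr sum_w_support eqxx andbT.
Qed.

Lemma adj_gram_AB_C_w (k k2 : 'I_2) :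
  (adjmx K_C *m K_C) k k2 = r ^+ 2 * \sum_(j < 2) ((k == k2) && (j * k == 0)%N : nat)%:R.
Proof.
rewrite adj_gram_AB_C exchange_big /= mulr_sumr; apply: eq_bigr => j _.
under eq_bigr do rewrite coef3_w_state_mul /=.
by rewrite -mulr_sumr sum_w_support eqxx.
Qed.

Lemma sqrtC_r2_nat (x : nat) : sqrtC (r ^+ 2 * x%:R) = r * sqrtC x%:R.
Proof. by rewrite sqrtCM ?nnegrE ?exprn_ge0 ?ler0n ?r_ge0 // sqrCK ?r_ge0. Qed.

Lemma trace_norm_A_CB_w : trace_norm (ptransposeX (pure_dm (vec_A_CB w_state))) = 3%:R.
Proof.
rewrite trace_norm_ptransposeX_pure_diag; last first.
  move=> y y'; case: (mxtens_indexP y) => k j; case: (mxtens_indexP y') => k2 j2 ne.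
  rewrite adj_gram_A_CB_w; case: (j =P j2) => [ej|_]; last by rewrite mulr0.
  case: (k =P k2) => [ek|_]; last by rewrite andbF mulr0.
  by move: ne; rewrite ej ek eqxx.
rewrite sum_mxtens_index.
under eq_bigr do under eq_bigr do rewrite adj_gram_A_CB_w !eqxx /= sqrtC_r2_nat.
rewrite !big_ord_recr !big_ord0 /= !sqrtC1 !sqrtC0 !add0r !mulr1 !mulr0 !addr0.
have -> : (r + r + r) ^+ 2 = 3%:R^-1 * (3%:R * 3%:R) by rewrite -r_sqr; ring.
by rewrite mulKf ?pnatr_eq0.
Qed.

Lemma trace_norm_AC_B_w :
  trace_norm (ptransposeX (pure_dm (vec_AC_B w_state))) = (r * (sqrtC 2%:R + 1)) ^+ 2.
Proof.
rewrite trace_norm_ptransposeX_pure_diag; last first.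
  by move=> j j2 ne; rewrite adj_gram_AC_B_w big1 ?mulr0 // => k _; rewrite (negPf ne).
under eq_bigr do rewrite adj_gram_AC_B_w eqxx -natr_sum sqrtC_r2_nat.
by rewrite -mulr_sumr !big_ord_recr !big_ord0 /= add0r !add0n addn0 sqrtC1.
Qed.

Lemma trace_norm_AB_C_w :
  trace_norm (ptransposeX (pure_dm (vec_AB_C w_state))) = (r * (sqrtC 2%:R + 1)) ^+ 2.
Proof.
rewrite trace_norm_ptransposeX_pure_diag; last first.
  by move=> k k2 ne; rewrite adj_gram_AB_C_w big1 ?mulr0 // => j _; rewrite (negPf ne).
under eq_bigr do rewrite adj_gram_AB_C_w eqxx -natr_sum sqrtC_r2_nat.
by rewrite -mulr_sumr !big_ord_recr !big_ord0 /= add0r !add0n addn0 sqrtC1.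
Qed.

Lemma w_state_unit : unit_vector w_state.
Proof.
rewrite /unit_vector -(proj1 (gram_A_CB w_state)) mxtrace_mulC /mxtrace sum_mxtens_index.
under eq_bigr do under eq_bigr do rewrite adj_gram_A_CB_w !eqxx.
by rewrite !big_ord_recr !big_ord0 /= r_sqr !mulr1 mulr0 !add0r addr0; field.
Qed.

Lemma w_state_negativity_gap : N_AC_B w_state + N_AB_C w_state < N_A_CB w_state.
Proof.
rewrite /N_AC_B /N_AB_C /N_A_CB /negativity.
rewrite trace_norm_A_CB_w trace_norm_AC_B_w trace_norm_AB_C_w -splitr.
have -> : ((3%:R - 1) / 2%:R : C) = 1.
  by rewrite -[3%:R]/((2 + 1)%:R) natrD addrK divff // pnatr_eq0.
have s_sqr : sqrtC 2%:R ^+ 2 = 2%:R :> C by rewrite sqrtCK.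
have s_ge0 : 0 <= sqrtC 2%:R :> C by rewrite sqrtC_ge0 ler0n.
move: (sqrtC 2%:R) s_sqr s_ge0 => s s_sqr s_ge0.
have -> : (r * (s + 1)) ^+ 2 = r ^+ 2 * (s ^+ 2 + s *+ 2 + 1) by ring.
rewrite r_sqr s_sqr ltrBlDr ltr_pdivrMl ?ltr0n // -subr_gt0.
have -> : (3%:R * (1 + 1) - (2%:R + s *+ 2 + 1) : C) = 3%:R - s *+ 2.
  by rewrite -[3%:R]/((1 + 2)%:R) -[2%:R]/((1 + 1)%:R) !natrD; ring.
rewrite subr_gt0 -ltr_sqr ?nnegrE ?mulrn_wge0 ?ler0n //.
have -> : (s *+ 2) ^+ 2 = s ^+ 2 *+ 4 by ring.
by rewrite s_sqr -natrX -mulr_natr -natrM ltr_nat.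
Qed.

End Counterexample.

Theorem theorem1 (R : realType) (dA : nat) (hdA : (2 <= dA)%N) :
  (forall (dB dC : nat) (psi : 'cV[R[i]]_(dA * dB * dC)),
      unit_vector psi -> N_A_CB psi <= N_AC_B psi + N_AB_C psi)
  <-> dA = 2%N.
Proof.
split=> [monogamy|->]; last by move=> dB dC psi; exact: qubit_negativity_monogamy.
have [dA_lt2|dA_gt2|//] := ltngtP dA 2; first by rewrite leqNgt dA_lt2 in hdA.
have := le_lt_trans (monogamy _ _ _ (w_state_unit _ dA_gt2)) (w_state_negativity_gap _ dA_gt2).
by rewrite ltxx.
Qed.
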